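(* For every $x\in\mathrm{mon}(\mathcal{B})$, \[ \sup_{N\in\mathbb{N}}\frac1{\sqrt N}\sum_{n=1}^N|x_n|<\infty; \] in particular $\mathrm{mon}(\mathcal{B})\subset\ell_{2,\infty}$.
   Context: For $N\in\mathbb{N}$, $\mathcal{B}_N$ is the space of functions $f\colon\{-1,1\}^N\to\mathbb{R}$ with sup norm and Fourier–Walsh coefficients $\widehat f(S)=2^{-N}\sum_xf(x)x^S$, $x^S=\prod_{n\in S}x_n$; $\mathcal{B}=\bigcup_N\mathcal{B}_N$. $\mathrm{mon}(\mathcal{B})$ is the set of $x\in\mathbb{R}^{\mathbb{N}}$ for which there is $C>0$ such that $\sum_{S\subset\{1,\dots,N\}}|\widehat f(S)x^S|\le C\|f\|_\infty$ for all $N$ and all $f\in\mathcal{B}_N$. $\ell_{2,\infty}$ is the space of real sequences $x$ with $\sup_n\sqrt n\,x^*_n<\infty$, $x^*$ the decreasing rearrangement of $(|x_n|)$. *)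

From HB Require Import structures.
From mathcomp Require Import all_boot all_order all_algebra.
From mathcomp Require Import all_classical all_reals ereal.
Set Implicit Arguments. Unset Strict Implicit. Unset Printing Implicit Defensive.
Import Order.TTheory GRing.Theory Num.Theory.
Local Open Scope ring_scope.

(* The Boolean cube {-1,1}^N: a point is a finite function 'I_N -> bool,
   coordinate i being +1 if true and -1 if false. *)
Definition cube (N : nat) := {ffun 'I_N -> bool}.

Definition sgnb (R : ringType) (b : bool) : R := if b then 1 else -1.

Definition walsh (R : ringType) (N : nat) (S : {set 'I_N}) (x : cube N) : R :=
  \prod_(i in S) sgnb R (x i).

Definition fourier (R : realFieldType) (N : nat) (f : cube N -> R)
  (S : {set 'I_N}) : R :=
  (2 ^+ N)^-1 * \sum_(x : cube N) f x * walsh R S x.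

Definition supnorm (R : realFieldType) (N : nat) (f : cube N -> R) : R :=
  \big[Num.max/0]_(x : cube N) `|f x|.

(* Convention: a real sequence (x_1, x_2, ...) is represented by
   x : nat -> R with x k = x_{k+1}.  Coordinate i : 'I_N of the cube
   corresponds to index i+1 in {1,...,N}. *)
Definition monomial (R : realFieldType) (x : nat -> R) (N : nat)
  (S : {set 'I_N}) : R := \prod_(i in S) x (nat_of_ord i).

Definition in_monB (R : realFieldType) (x : nat -> R) : Prop :=
  exists C : R, 0 < C /\
    forall (N : nat) (f : cube N -> R),
      \sum_(S : {set 'I_N}) `|fourier f S * monomial x S| <= C * supnorm f.

(* Decreasing rearrangement x^*_{n+1} (0-indexed: decr x n), defined through the
   distribution function:  x^*_{n+1} = inf { t >= 0 : #{k : |x_k| > t} <= n },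
   as an extended real (+oo if the set is empty, i.e. x unbounded-type case). *)
Definition decr (R : realType) (x : nat -> R) (n : nat) : \bar R :=
  ereal_inf [set (t%:E)%E | t in
    [set t : R | 0 <= t /\ exists s : seq nat,
        (size s <= n)%N /\ forall k, t < `|x k| -> k \in s]].

Definition in_l2inf (R : realType) (x : nat -> R) : Prop :=
  exists M : R, forall n : nat,
    ((Num.sqrt (n.+1%:R : R))%:E * decr x n <= M%:E)%E.

From HB Require Import structures.
From mathcomp Require Import all_boot all_order all_algebra.
From mathcomp Require Import all_classical all_reals ereal.
From mathcomp Require Import ring lra.
Import Order.TTheory GRing.Theory Num.Theory.
Set Implicit Arguments. Unset Strict Implicit.
Local Open Scope ring_scope.

(* Let x be in mon(B) with constant C, and test the defining inequality on
   f = sign(sum_{i<N} x_i eps_i), a function of sup norm at most 1.  Its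
   degree-one Fourier coefficients are E[f eps_i], so the singleton part of
   sum_S |f^(S) x^S| equals E|sum_i x_i eps_i|, which is therefore <= C.
   Khintchine's inequality in L^1, proved here from the moment identities
   E S^2 = ||x||_2^2 and E S^4 <= 3 ||x||_2^4 for Rademacher sums S, turns this
   into ||x||_2 <= 8 C.  Both conclusions then follow from square
   summability: the first by Cauchy-Schwarz, the second by Chebyshev counting
   (at most n indices satisfy |x_k| > 2 ||x||_2 / sqrt(n+1)). *)

Section CubeAverage.
Variable R : realFieldType.

Definition ccons N (b : bool) (y : cube N) : cube N.+1 :=
  [ffun i : 'I_N.+1 => if unlift ord0 i is Some j then y j else b].
Definition ctail N (y : cube N.+1) : cube N := [ffun j : 'I_N => y (lift ord0 j)].

Lemma sum_cubeS N (G : cube N.+1 -> R) :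
  \sum_(y : cube N.+1) G y = \sum_(b : bool) \sum_(y : cube N) G (ccons b y).
Proof.
rewrite pair_bigA /= (reindex (fun p : bool * cube N => ccons p.1 p.2)) //=.
exists (fun y : cube N.+1 => (y ord0, ctail y)).
  move=> [b y] _ /=; congr pair; first by rewrite ffunE unlift_none.
  by apply/ffunP => j; rewrite !ffunE liftK.
move=> y _; apply/ffunP => i; rewrite !ffunE.
by case: unliftP => [j|] ->; rewrite ?ffunE.
Qed.

(* The mean of g over the cube, i.e. its expectation under the uniform
   probability (the Rademacher variables are the coordinates). *)
Definition mean N (g : cube N -> R) : R := (2 ^+ N)^-1 * \sum_(y : cube N) g y.

Lemma meanS N (G : cube N.+1 -> R) :
  mean G = mean (fun y => (G (ccons true y) + G (ccons false y)) / 2).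
Proof.
rewrite /mean sum_cubeS big_bool -big_split -mulr_suml exprS invfM; ring.
Qed.

Lemma meanD N (f g : cube N -> R) : mean (fun y => f y + g y) = mean f + mean g.
Proof. by rewrite /mean big_split mulrDr. Qed.

Lemma meanZ N c (f : cube N -> R) : mean (fun y => c * f y) = c * mean f.
Proof. by rewrite /mean -mulr_sumr; ring. Qed.

Lemma mean_cst N c : mean (fun _ : cube N => c) = c.
Proof.
rewrite /mean sumr_const card_ffun card_ord card_bool.
have -> : c *+ (2 ^ N) = c * 2 ^+ N by rewrite -natrX mulr_natr.
by rewrite mulrCA mulVf ?mulr1 // expf_neq0 // pnatr_eq0.
Qed.

Lemma ler_mean N (f g : cube N -> R) : (forall y, f y <= g y) -> mean f <= mean g.
Proof.
move=> fg; rewrite ler_wpM2l ?invr_ge0 ?exprn_ge0 //.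
by apply: ler_sum => y _.
Qed.

End CubeAverage.

Section RademacherMoments.
Variable R : realFieldType.

Definition rsum N (a : nat -> R) (y : cube N) : R := \sum_(i < N) a i * sgnb R (y i).

Lemma rsum_ccons N (a : nat -> R) b (y : cube N) :
  rsum a (ccons b y) = a 0%N * sgnb R b + rsum (fun k => a k.+1) y.
Proof.
rewrite /rsum big_ord_recl ffunE unlift_none; congr (_ + _).
by apply: eq_bigr => j _; rewrite ffunE liftK.
Qed.

Lemma rsum0 (a : nat -> R) (y : cube 0) : rsum a y = 0.
Proof. exact: big_ord0. Qed.

(* Second moment: the Rademacher variables are orthonormal. *)
Lemma mean_rsum_sqr N (a : nat -> R) :
  mean (fun y : cube N => rsum a y ^+ 2) = \sum_(i < N) a i ^+ 2.
Proof.
elim: N a => [|N IH] a.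
  by rewrite big_ord0 -(mean_cst 0 0); under eq_fun do rewrite rsum0 expr0n.
rewrite meanS big_ord_recl -(IH (fun k => a k.+1)) -(mean_cst N (a 0%N ^+ 2)) -meanD.
by apply: f_equal; apply: funext => y; rewrite !rsum_ccons /=; field.
Qed.

Lemma mean_rsum_quartic N (a : nat -> R) :
  mean (fun y : cube N => rsum a y ^+ 4) <= 3 * (\sum_(i < N) a i ^+ 2) ^+ 2.
Proof.
elim: N a => [|N IH] a.
  by rewrite big_ord0; under eq_fun do rewrite rsum0 expr0n; rewrite mean_cst expr0n mulr0.
set b := fun k => a k.+1; rewrite meanS big_ord_recl.
have -> : mean (fun y : cube N =>
      (rsum a (ccons true y) ^+ 4 + rsum a (ccons false y) ^+ 4) / 2)
    = a 0%N ^+ 4 + 6 * a 0%N ^+ 2 * mean (fun y : cube N => rsum b y ^+ 2)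
      + mean (fun y : cube N => rsum b y ^+ 4).
  rewrite -meanZ -(mean_cst N (a 0%N ^+ 4)) -!meanD.
  by apply: f_equal; apply: funext => y; rewrite !rsum_ccons /=; field.
have -> : \sum_(i < N) a (lift ord0 i) ^+ 2 = \sum_(i < N) b i ^+ 2 by [].
rewrite mean_rsum_sqr; have := IH b.
set Q := \sum_(i < N) _; set u := a 0%N ^+ 2.
have Q0 : 0 <= Q by apply: sumr_ge0 => i _; apply: sqr_ge0.
have u0 : 0 <= u by apply: sqr_ge0.
have -> : a 0%N ^+ 4 = u ^+ 2 by rewrite -exprM.
nra.
Qed.

End RademacherMoments.

Section Khintchine.
Variable R : rcfType.

(* Pointwise comparison of t^2 with |t| and t^4 at scale k: either |t| <= k,
   so t^2 <= k|t|, or |t| > k, so t^2 <= t^4 / k^2. *)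
Lemma sqr_le_norm_quartic (t k : R) : 0 < k -> t ^+ 2 <= k * `|t| + t ^+ 4 / k ^+ 2.
Proof.
move=> k0; have u0 := normr_ge0 t.
rewrite [t ^+ 4](exprM t 2 2) -real_normK ?num_real //; set u := `|t| in u0 *.
have k20 : 0 < k ^+ 2 by rewrite exprn_gt0.
have [ukl|kul] := lerP u k.
  have : u ^+ 2 <= k * u by rewrite expr2 ler_wpM2r.
  have : 0 <= (u ^+ 2) ^+ 2 / k ^+ 2 by rewrite divr_ge0 ?exprn_ge0 // ltW.
  lra.
have : u ^+ 2 <= (u ^+ 2) ^+ 2 / k ^+ 2.
  have : k ^+ 2 <= u ^+ 2 by rewrite !expr2; nra.
  rewrite ler_pdivlMr //; nra.
have : 0 <= k * u by rewrite mulr_ge0 // ltW.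
lra.
Qed.

(* Proof: integrate the pointwise
   bound above with k = 2 ||a||_2 and use the moment formulas. *)
Lemma khintchine_L1 N (a : nat -> R) :
  Num.sqrt (\sum_(i < N) a i ^+ 2) <= 8 * mean (fun y : cube N => `|rsum a y|).
Proof.
set Q := \sum_(i < N) _; set e := mean _.
have e0 : 0 <= e by rewrite -(mean_cst N 0); apply: ler_mean => y.
have [Q0|Qpos] := eqVneq Q 0; first by rewrite Q0 sqrtr0 mulr_ge0.
have Qgt0 : 0 < Q by rewrite lt0r Qpos sumr_ge0 // => i _; apply: sqr_ge0.
set s := Num.sqrt Q; have s0 : 0 < s by rewrite sqrtr_gt0.
have sQ : s ^+ 2 = Q by rewrite sqr_sqrtr // ltW.
have ks : 0 < 2 * s by rewrite mulr_gt0.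
have : Q <= 2 * s * e + 3 * Q ^+ 2 / (2 * s) ^+ 2.
  have := ler_mean (fun y : cube N => sqr_le_norm_quartic (rsum a y) ks).
  rewrite mean_rsum_sqr meanD meanZ => /le_trans; apply; rewrite lerD2l.
  under eq_fun do rewrite mulrC.
  rewrite meanZ mulrC; apply: ler_wpM2r; last exact: mean_rsum_quartic.
  by rewrite invr_ge0 exprn_ge0 // ltW.
rewrite -sQ; have -> : 3 * (s ^+ 2) ^+ 2 / (2 * s) ^+ 2 = 3 / 4 * s ^+ 2.
  by field; rewrite gt_eqF.
nra.
Qed.

End Khintchine.

Section SingletonCoefficients.
Variable R : realFieldType.

(* The degree-one Fourier coefficients of f = sign(sum_i a_i eps_i) are
   E[f eps_i], so pairing them with a_i recovers E |sum_i a_i eps_i|. *)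
Lemma fourier_sign_rsum N (a : nat -> R) :
  \sum_(i < N) fourier (fun y => Num.sg (rsum a y)) [set i] * monomial a [set i]
  = mean (fun y : cube N => `|rsum a y|).
Proof.
rewrite /mean /fourier /monomial.
under eq_bigr do rewrite big_set1 /walsh.
under eq_bigr do under eq_bigr do rewrite big_set1.
under eq_bigr do rewrite -mulrA.
rewrite -mulr_sumr; congr (_ * _).
under eq_bigr do rewrite mulr_suml.
rewrite exchange_big /=; apply: eq_bigr => y _.
by rewrite normrEsg /rsum mulr_sumr; apply: eq_bigr => i _; ring.
Qed.

Lemma sum_singletons_le N (g : {set 'I_N} -> R) :
  \sum_(i < N) g [set i] <= \sum_(S : {set 'I_N}) `|g S|.
Proof.
apply: (@le_trans _ _ (\sum_(i < N) `|g [set i]|)).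
  by apply: ler_sum => i _; apply: ler_norm.
rewrite -(big_imset (fun S => `|g S|) (in2W set1_inj)) /=.
rewrite [leRHS](bigID (mem [set [set i] | i : 'I_N])) /= lerDl.
by apply: sumr_ge0 => S _.
Qed.

End SingletonCoefficients.

(* If x is in mon(B) with constant C, testing against f = sign(sum_i x_i eps_i),
   of sup norm at most 1, gives E |sum_i x_i eps_i| <= C, and Khintchine's
   inequality then bounds the l^2 norm of every section of x by 8 C. *)
Lemma monB_sum_sqr_le (R : rcfType) (x : nat -> R) (C : R) : 0 < C ->
  (forall (N : nat) (f : cube N -> R),
      \sum_(S : {set 'I_N}) `|fourier f S * monomial x S| <= C * supnorm f) ->
  forall N, \sum_(i < N) x i ^+ 2 <= (8 * C) ^+ 2.
Proof.
move=> C0 monC N; set f := fun y : cube N => Num.sg (rsum x y).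
have f1 : supnorm f <= 1.
  by apply: bigmax_le => // y _; rewrite normr_sg; case: (_ != 0).
have meanC : mean (fun y : cube N => `|rsum x y|) <= C.
  rewrite -fourier_sign_rsum.
  rewrite (le_trans (sum_singletons_le (fun S => fourier f S * monomial x S))) //.
  by rewrite (le_trans (monC N f)) // ler_piMr // ltW.
have sqrtC : Num.sqrt (\sum_(i < N) x i ^+ 2) <= 8 * C.
  by rewrite (le_trans (khintchine_L1 N x)) // ler_pM2l.
have Q0 : 0 <= \sum_(i < N) x i ^+ 2 by apply: sumr_ge0 => i _; apply: sqr_ge0.
by rewrite -(sqr_sqrtr Q0) lerXn2r ?nnegrE ?sqrtr_ge0 // mulr_ge0 // ltW.
Qed.

Section SquareSums.
Variable R : realFieldType.

Lemma sqr_sum_norm_le N (a : 'I_N -> R) :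
  (\sum_i `|a i|) ^+ 2 <= N%:R * \sum_i a i ^+ 2.
Proof.
have amgm i j : 2 * (`|a i| * `|a j|) <= a i ^+ 2 + a j ^+ 2.
  rewrite -[a i ^+ 2]real_normK ?num_real // -[a j ^+ 2]real_normK ?num_real //.
  by have := sqr_ge0 (`|a i| - `|a j|); lra.
have double : 2 * (\sum_i \sum_j `|a i| * `|a j|) <= 2 * (N%:R * \sum_i a i ^+ 2).
  have -> : 2 * (\sum_i \sum_j `|a i| * `|a j|) = \sum_i \sum_j 2 * (`|a i| * `|a j|).
    by rewrite mulr_sumr; apply: eq_bigr => i _; rewrite mulr_sumr.
  apply: (le_trans (ler_sum _ (fun i _ => ler_sum _ (fun j _ => amgm i j)))).
  under eq_bigr do rewrite big_split sumr_const card_ord /=.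
  by rewrite big_split /= sumrMnl sumr_const card_ord -[_ *+ N]mulr_natl; lra.
rewrite expr2 mulr_suml; under eq_bigr do rewrite mulr_sumr.
by rewrite -(ler_pM2l (_ : 0 < 2)).
Qed.

Lemma count_large_mul_sqr_le (x : nat -> R) (t : R) (s : seq nat) : 0 <= t ->
  (count (fun k => t < `|x k|) s)%:R * t ^+ 2 <= \sum_(k <- s) x k ^+ 2.
Proof.
move=> t0; elim: s => [|k s IH]; first by rewrite big_nil mul0r.
rewrite big_cons /= natrD mulrDl lerD //.
have [tx|] := boolP (t < `|x k|); last by rewrite mul0r sqr_ge0.
by rewrite /= mul1r -[x k ^+ 2]real_normK ?num_real // lerXn2r ?nnegrE // ltW.
Qed.

Lemma count_large_le (x : nat -> R) (B t : R) (n : nat) : 0 <= t ->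
  (forall M, \sum_(k < M) x k ^+ 2 <= B) -> B < n.+1%:R * t ^+ 2 ->
  forall M, (count (fun k => (t < `|x k|)%R) (iota 0 M) <= n)%N.
Proof.
move=> t0 l2B Bt M.
have B0 : 0 <= B by rewrite (le_trans _ (l2B 0%N)) // big_ord0.
have t2 : 0 < t ^+ 2 by rewrite -(pmulr_rgt0 _ (ltr0Sn R n)) (le_lt_trans B0 Bt).
rewrite -ltnS -(ltr_nat R) -(ltr_pM2r t2).
rewrite (le_lt_trans (count_large_mul_sqr_le x (iota 0 M) t0)) //.
have -> : iota 0 M = index_iota 0 M by rewrite /index_iota subn0.
by rewrite (le_lt_trans _ Bt) // big_mkord.
Qed.

End SquareSums.

Lemma sum_norm_le_sqrt (R : rcfType) N (a : nat -> R) :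
  \sum_(i < N) `|a i| <= Num.sqrt N%:R * Num.sqrt (\sum_(i < N) a i ^+ 2).
Proof.
have S0 : 0 <= \sum_(i < N) `|a i| by apply: sumr_ge0.
rewrite -sqrtrM ?ler0n // -(ger0_norm S0) -sqrtr_sqr ler_wsqrtr //.
exact: (sqr_sum_norm_le (fun i : 'I_N => a i)).
Qed.

(* A predicate holding at most n times in every initial segment holds on a
   set of at most n elements: take the segment where the count is maximal. *)
Lemma finite_of_bounded_count (P : pred nat) (n : nat) :
  (forall M, (count P (iota 0 M) <= n)%N) ->
  exists s : seq nat, (size s <= n)%N /\ forall k, P k -> k \in s.
Proof.
move=> bounded; set c := fun M => count P (iota 0 M).
have cval : exists j, `[< exists M, c M = j >] by exists 0%N; apply/asboolP; exists 0%N.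
have cbound j : `[< exists M, c M = j >] -> (j <= n)%N.
  by move/asboolP=> [M <-]; apply: bounded.
case: (ex_maxnP cval cbound) => _ /asboolP [M0 <-] cmax.
exists (seq.filter P (iota 0 M0)); split; first by rewrite size_filter.
move=> k Pk; rewrite mem_filter Pk mem_iota add0n /= ltnNge; apply/negP => M0k.
have := cmax (c k.+1) (asboolT (ex_intro _ k.+1 erefl)).
rewrite /c -(subnKC (leqW M0k)) iotaD count_cat add0n -[leqRHS]addn0 leq_add2l leqn0.
move=> /eqP c0; suff : has P (iota M0 (k.+1 - M0)) by rewrite has_count c0.
by apply/hasP; exists k => //; rewrite mem_iota subnKC ?M0k ?ltnSn // leqW.
Qed.

Section Rearrangement.
Variable R : realType.

Lemma decr_le (x : nat -> R) (t : R) (n : nat) : 0 <= t ->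
  (forall M, (count (fun k => (t < `|x k|)%R) (iota 0 M) <= n)%N) ->
  (decr x n <= t%:E)%E.
Proof.
move=> t0 bounded; apply: ge_ereal_inf; exists (t%:E) => //; exists t => //.
by split => //; apply: finite_of_bounded_count.
Qed.

Lemma l2_in_l2inf (x : nat -> R) (K : R) : 0 < K ->
  (forall N, \sum_(i < N) x i ^+ 2 <= K ^+ 2) -> in_l2inf x.
Proof.
move=> K0 l2K; exists (2 * K) => n.
have s0 : 0 < Num.sqrt (n.+1%:R : R) by rewrite sqrtr_gt0 ltr0Sn.
set t := 2 * K / Num.sqrt n.+1%:R.
have t0 : 0 <= t by rewrite divr_ge0 ?mulr_ge0 ?ltW.
have Bt : K ^+ 2 < n.+1%:R * t ^+ 2.
  rewrite /t expr_div_n sqr_sqrtr ?ler0n // mulrCA divff ?pnatr_eq0 // mulr1 exprMn.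
  by rewrite ltr_pMl ?exprn_gt0 // expr2; lra.
have decr_t := decr_le t0 (count_large_le t0 l2K Bt).
apply: le_trans (lee_wpmul2l _ decr_t) _; first by rewrite lee_fin ltW.
by rewrite -EFinM lee_fin /t mulrCA divff ?gt_eqF // mulr1.
Qed.

End Rearrangement.

Theorem proposition6p12 (R : realType) (x : nat -> R) :
  in_monB x ->
  (exists M : R, forall N : nat,
      (Num.sqrt (N.+1%:R : R))^-1 * \sum_(n < N.+1) `|x n| <= M)
  /\ in_l2inf x.
Proof.
move=> [C [C0 monC]].
have K0 : 0 < 8 * C by rewrite mulr_gt0.
have l2 := monB_sum_sqr_le C0 monC.
split; last exact: l2_in_l2inf K0 l2.
exists (8 * C) => N.
have sN : 0 < Num.sqrt (N.+1%:R : R) by rewrite sqrtr_gt0 ltr0Sn.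
rewrite ler_pdivrMl // (le_trans (sum_norm_le_sqrt N.+1 x)) // ler_pM2l //.
by rewrite -(ger0_norm (ltW K0)) -sqrtr_sqr ler_wsqrtr.
Qed.
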